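(* Let $N\ge 2$, let $s=(s_1,\dots,s_{N-1})\in\mathbb{C}^{N-1}$ be generic, set $x_a=2s_a-2s_{a-1}$ ($1\le a\le N$, $s_0=s_N=0$), and let $$F(s)=\mathbb{1}\otimes\mathbb{1}-\sum_{1\le a<b\le N}\frac{2}{x_a-x_b}\,E_{ab}\otimes E_{ba}.$$ Let $R(u)=\dfrac{\rho(u)}{u+1}\big(u\,\mathbb{1}\otimes\mathbb{1}+P\big)$ be the (normalised) Yang $R$-matrix of the double Yangian of $sl_N$ in the fundamental representation, with $$\rho(u)=\frac{\Gamma_1(u|N)\,\Gamma_1(u+N|N)}{\Gamma_1(u+1|N)\,\Gamma_1(u+N-1|N)}.$$ Then $R(u,s):=F_{21}(s)\,R(u)\,F_{12}(s)^{-1}$, written as $\sum R_{i_1i_2}^{j_1j_2}E_{i_1j_1}\otimes E_{i_2j_2}$, has non-vanishing entries ($1\le a,b\le N$, $a\ne b$ in the last two) $$R_{aa}^{aa}=\rho(u),\qquad R_{ab}^{ab}=\rho(u)\begin{cases}\dfrac{u}{u+1}& b>a,\\[2mm] \Big(1-\dfrac{4}{(x_a-x_b)^2}\Big)\dfrac{u}{u+1} & b<a,\end{cases}\qquad R_{ab}^{ba}=\rho(u)\Big(1+\frac{2u}{x_a-x_b}\Big)\frac{1}{u+1},$$ and it satisfies the dynamical Yang--Baxter equation with additive spectral parameter $$R_{12}(\beta,s+h^{(3)})\,R_{13}(\beta+\beta',s)\,R_{23}(\beta',s+h^{(1)})=R_{23}(\beta',s)\,R_{13}(\beta+\beta',s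+h^{(2)})\,R_{12}(\beta,s).$$
   Context: $E_{ab}$ is the $N\times N$ elementary matrix, $P$ the flip of $\mathbb{C}^N\otimes\mathbb{C}^N$, $F_{21}=PF_{12}P$. $\Gamma_1(x|\omega)=\frac{\omega^{x/\omega}}{\sqrt{2\pi\omega}}\Gamma(x/\omega)$. Shift notation: with $h_j=E_{jj}-E_{j+1,j+1}$, $(d_{ij})$ the inverse Cartan matrix of $sl_N$ and $h^\vee_i=\sum_j d_{ij}h_j$, the expression $R_{12}(\beta,s+h^{(3)})$ means $R_{12}(\beta,s)$ with each $s_i$ replaced by $s_i+h^\vee_i$ acting (diagonally) in the third tensor factor of $(\mathbb{C}^N)^{\otimes3}$; similarly for $h^{(1)},h^{(2)}$. *)

From HB Require Import structures.
From mathcomp Require Import all_boot all_order all_algebra.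
From mathcomp Require Import all_classical all_reals all_analysis.
From mathcomp Require Import complex.

Set Implicit Arguments.
Unset Strict Implicit.
Unset Printing Implicit Defensive.

Import Order.TTheory GRing.Theory Num.Theory.
Import numFieldNormedType.Exports.
Local Open Scope ring_scope.
Local Open Scope complex_scope.

Section Defs.
Variable R : realType.
Local Notation C := R[i].

Definition expC (z : C) : C :=
  (expR (complex.Re z) * cos (complex.Im z)) +i* (expR (complex.Re z) * sin (complex.Im z)).

Definition powC (w : R) (z : C) : C := expC (z * (ln w)%:C).

(* Gauss' product formula: Gamma(z) = lim_n n^z n! / (z (z+1) ... (z+n)) *)
Definition gauss_seq (z : C) (n : nat) : C :=
  powC n%:R z * (n`!)%:R / \prod_(k < n.+1) (z + k%:R).

Definition GammaC (z : C) : C :=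
  (limn (fun n => complex.Re (gauss_seq z n))) +i* (limn (fun n => complex.Im (gauss_seq z n))).

Definition Gamma1 (x : C) (w : R) : C :=
  powC w (x / w%:C) / (Num.sqrt (2 * pi * w))%:C * GammaC (x / w%:C).

Definition rho (N : nat) (u : C) : C :=
  let w := (N%:R : R) in
  Gamma1 u w * Gamma1 (u + N%:R) w /
  (Gamma1 (u + 1) w * Gamma1 (u + N%:R - 1) w).

Definition op2 (N : nat) := 'M[C]_#|{: 'I_N * 'I_N}|.
Definition op3 (N : nat) := 'M[C]_#|{: 'I_N * 'I_N * 'I_N}|.

Definition idx2 N (i1 i2 : 'I_N) : 'I_#|{: 'I_N * 'I_N}| := enum_rank (i1, i2).

(* the entry R_{i1 i2}^{j1 j2} of R = sum R_{i1i2}^{j1j2} E_{i1j1} (x) E_{i2j2} *)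
Definition entry2 N (M : op2 N) (i1 i2 j1 j2 : 'I_N) : C :=
  M (idx2 i1 i2) (idx2 j1 j2).

Definition Emx N (a b : 'I_N) : 'M[C]_N := delta_mx a b.

Definition tens2 N (A B : 'M[C]_N) : op2 N :=
  \matrix_(i, j) (A (enum_val i).1 (enum_val j).1 * B (enum_val i).2 (enum_val j).2).

Definition flip N : op2 N := \sum_(a < N) \sum_(b < N) tens2 (Emx a b) (Emx b a).

Definition op21 N (X : op2 N) : op2 N := flip N *m X *m flip N.

(* The argument is a family of operators indexed
   by the basis vector of the remaining factor, which acts diagonally; this
   encodes the shifts s + h^{(k)}.  Un-shifted operators are constant families. *)
Definition lift12 N (f : 'I_N -> op2 N) : op3 N :=
  \matrix_(i, j) (let: (i1, i2, i3) := enum_val i in let: (j1, j2, j3) := enum_val j in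
                  f i3 (idx2 i1 i2) (idx2 j1 j2) * (i3 == j3)%:R).
Definition lift13 N (f : 'I_N -> op2 N) : op3 N :=
  \matrix_(i, j) (let: (i1, i2, i3) := enum_val i in let: (j1, j2, j3) := enum_val j in
                  f i2 (idx2 i1 i3) (idx2 j1 j3) * (i2 == j2)%:R).
Definition lift23 N (f : 'I_N -> op2 N) : op3 N :=
  \matrix_(i, j) (let: (i1, i2, i3) := enum_val i in let: (j1, j2, j3) := enum_val j in
                  f i1 (idx2 i2 i3) (idx2 j2 j3) * (i1 == j1)%:R).

(* s = (s_1, ..., s_{N-1}) is a function 'I_N.-1 -> C, s_i = s (i-1);
   sext s k = s_k with the convention s_0 = s_N = 0 *)
Definition sext N (s : 'I_N.-1 -> C) (k : nat) : C :=
  match k with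
  | 0 => 0
  | k'.+1 => if @insub nat (fun m => (m < N.-1)%N) 'I_N.-1 k' is Some i then s i else 0
  end.

(* x_a = 2 s_a - 2 s_{a-1}, for a = 1..N (a : 'I_N stands for a+1) *)
Definition xvar N (s : 'I_N.-1 -> C) (a : 'I_N) : C :=
  2 * sext s a.+1 - 2 * sext s a.

Definition Fmx N (s : 'I_N.-1 -> C) : op2 N :=
  1%:M - \sum_(a < N) \sum_(b < N | (a < b)%N)
           (2 / (xvar s a - xvar s b)) *: tens2 (Emx a b) (Emx b a).

Definition Ryang N (u : C) : op2 N := (rho N u / (u + 1)) *: (u *: 1%:M + flip N).

Definition Rdyn N (u : C) (s : 'I_N.-1 -> C) : op2 N :=
  op21 (Fmx s) *m Ryang N u *m invmx (Fmx s).

(* Cartan matrix of sl_N (indices i : 'I_N.-1 stand for i+1) and its inverse d_ij *)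
Definition cartan N : 'M[C]_N.-1 :=
  \matrix_(i, j) (if i == j then 2 else if (i.+1 == j) || (j.+1 == i) then -1 else 0).
Definition invcartan N : 'M[C]_N.-1 := invmx (cartan N).

(* eigenvalue of h_j = E_jj - E_{j+1,j+1} on the basis vector e_k *)
Definition h_ev N (j : 'I_N.-1) (k : 'I_N) : C :=
  ((j : nat) == k)%:R - (j.+1 == k)%:R.

Definition hvee_ev N (i : 'I_N.-1) (k : 'I_N) : C :=
  \sum_(j < N.-1) invcartan N i j * h_ev j k.

(* s + h^vee evaluated on the basis vector e_k of the acting factor *)
Definition sshift N (s : 'I_N.-1 -> C) (k : 'I_N) : 'I_N.-1 -> C :=
  fun i => s i + hvee_ev i k.

End Defs.

(* All the operators involved (1, P, F(s), and hence R(u,s)) map e_a (x) e_b into the span of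
   e_a (x) e_b and e_b (x) e_a.  Such operators multiply by an explicit rule; this gives F(s)^-1 in
   closed form and R(u,s) = rho(u)/(u+1) Rred(u, x), where Rred depends on s only through the
   differences x_a - x_b.  The inverse Cartan matrix of sl_N is d_ij = min(i,j) - ij/N, so letting
   h^vee act on e_k turns x_a into x_a + 2 delta_ak - 2/N, and the constant drops out of the
   differences.  The dynamical Yang-Baxter equation thus becomes an identity between rational
   functions of the x_a.  It is checked on each basis vector e_a (x) e_b (x) e_c, which every lifted
   factor sends to at most two basis vectors, by case analysis on the coincidences and the order of
   a, b, c, genericity of s keeping the denominators nonzero. *)

From HB Require Import structures.
From mathcomp Require Import all_boot all_order all_algebra.
From mathcomp Require Import all_classical all_reals all_analysis.
From mathcomp Require Import complex.
From mathcomp Require Import ring zify.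

Set Implicit Arguments.
Unset Strict Implicit.
Unset Printing Implicit Defensive.

Import Order.TTheory GRing.Theory Num.Theory.
Import numFieldNormedType.Exports.
Local Open Scope ring_scope.
Local Open Scope complex_scope.

Section MatricesIndexedByFinType.
Variables (K : pzRingType) (T : finType).

Definition mxentry (M : 'M[K]_#|{: T}|) (x y : T) : K := M (enum_rank x) (enum_rank y).

Lemma mxentryP (M M' : 'M[K]_#|{: T}|) :
  (forall x y, mxentry M x y = mxentry M' x y) -> M = M'.
Proof.
move=> eqM; apply/matrixP => i j.
by rewrite -(enum_valK i) -(enum_valK j); exact: eqM.
Qed.

Lemma mxentryD (A B : 'M[K]_#|{: T}|) x y :
  mxentry (A + B) x y = mxentry A x y + mxentry B x y.
Proof. by rewrite /mxentry mxE. Qed.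

Lemma mxentryZ (k : K) (A : 'M[K]_#|{: T}|) x y :
  mxentry (k *: A) x y = k * mxentry A x y.
Proof. by rewrite /mxentry mxE. Qed.

Lemma mxentry_sum (I : finType) (F : I -> 'M[K]_#|{: T}|) x y :
  mxentry (\sum_i F i) x y = \sum_i mxentry (F i) x y.
Proof. by rewrite /mxentry summxE. Qed.

Lemma mxentry_mul (A B : 'M[K]_#|{: T}|) x y :
  mxentry (A *m B) x y = \sum_z mxentry A x z * mxentry B z y.
Proof.
rewrite /mxentry mxE (reindex enum_rank) //.
by exists enum_val => z _; [exact: enum_rankK | exact: enum_valK].
Qed.

Lemma mxentry_mul_sparse (A B : 'M[K]_#|{: T}|) (p q : T -> K) (sigma : T -> T) :
  (forall x y, mxentry A x y = p x * (y == x)%:R + q x * (y == sigma x)%:R) ->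
  forall x y, mxentry (A *m B) x y = p x * mxentry B x y + q x * mxentry B (sigma x) y.
Proof.
move=> entryA x y; rewrite mxentry_mul.
under eq_bigr do rewrite entryA mulrDl -!mulrA !mulr_natl !mulrb.
by rewrite big_split /= -!mulr_sumr -!big_mkcond /= !big_pred1_eq.
Qed.

End MatricesIndexedByFinType.

Lemma sum_ord_delta (K : pzRingType) (m n : nat) (f : nat -> K) :
  \sum_(j < m) ((j == n :> nat)%:R * f j) = if (n < m)%N then f n else 0.
Proof.
transitivity (\sum_(j < m | j == n :> nat) f j); last exact: big_ord1_eq.
rewrite [RHS]big_mkcond.
by apply: eq_bigr => j _; rewrite mulr_natl mulrb.
Qed.

Lemma mulmx1_invmx (K : comUnitRingType) n (A B : 'M[K]_n) :
  A *m B = 1%:M -> invmx A = B.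
Proof.
move=> AB; have [Au _] := mulmx1_unit AB.
by rewrite -[RHS]mul1mx -(mulVmx Au) -mulmxA AB mulmx1.
Qed.

Section TwoSiteOperators.
Variables (R : realType) (N : nat).
Local Notation C := R[i].

(* [swapop al be] is sum_(a,b) (al a b E_aa (x) E_bb + be a b E_ab (x) E_ba). *)
Definition swapop (al be : 'I_N -> 'I_N -> C) : op2 R N :=
  \matrix_(i, j) let x := enum_val i in
    al x.1 x.2 * (enum_val j == x)%:R + be x.1 x.2 * (enum_val j == (x.2, x.1))%:R.

Lemma mxentry_swapop al be x y :
  mxentry (swapop al be) x y =
  al x.1 x.2 * (y == x)%:R + be x.1 x.2 * (y == (x.2, x.1))%:R.
Proof. by rewrite /mxentry mxE !enum_rankK. Qed.

Lemma swapop_mul al be al' be' :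
  swapop al be *m swapop al' be' =
  swapop (fun a b => al a b * al' a b + be a b * be' b a)
         (fun a b => al a b * be' a b + be a b * al' b a).
Proof.
apply: mxentryP => -[a b] y.
rewrite (mxentry_mul_sparse _ (mxentry_swapop al be)) !mxentry_swapop /=.
ring.
Qed.

Lemma swapopD al be al' be' :
  swapop al be + swapop al' be' =
  swapop (fun a b => al a b + al' a b) (fun a b => be a b + be' a b).
Proof. by apply: mxentryP => x y; rewrite mxentryD !mxentry_swapop; ring. Qed.

Lemma swapopZ (k : C) al be :
  k *: swapop al be = swapop (fun a b => k * al a b) (fun a b => k * be a b).
Proof. by apply: mxentryP => x y; rewrite mxentryZ !mxentry_swapop; ring. Qed.

Lemma swapop1 : 1%:M = swapop (fun _ _ => 1) (fun _ _ => 0).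
Proof.
apply: mxentryP => x y; rewrite mxentry_swapop /mxentry mxE.
by rewrite (inj_eq enum_rank_inj) eq_sym mul1r mul0r addr0.
Qed.

Lemma mxentry_tens2 (A B : 'M[C]_N) x y :
  mxentry (tens2 A B) x y = A x.1 y.1 * B x.2 y.2.
Proof. by rewrite /mxentry mxE !enum_rankK. Qed.

Lemma sum_exchange_swapop (f : 'I_N -> 'I_N -> C) :
  \sum_a \sum_b f a b *: tens2 (Emx R a b) (Emx R b a) = swapop (fun _ _ => 0) f.
Proof.
apply: mxentryP => -[a b] [c e]; rewrite mxentry_swapop mxentry_sum.
under eq_bigr do rewrite mxentry_sum.
rewrite pair_bigA /= (bigD1 (a, b)) //= big1 => [|[a' b'] /= neq_ab'].
  rewrite mxentryZ mxentry_tens2 !mxE /= !eqxx mul0r add0r addr0.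
  by rewrite -natrM mulnb xpair_eqE.
rewrite mxentryZ mxentry_tens2 !mxE /=.
case: (a' =P a) neq_ab' => [->|/eqP/negbTE]; last by rewrite eq_sym => ->; rewrite mulr0n mul0r mulr0.
case: (b' =P b) => [->|/eqP/negbTE]; first by rewrite eqxx.
by rewrite eq_sym => ->; rewrite mulr0n !mulr0.
Qed.

Lemma flip_swapop : flip R N = swapop (fun _ _ => 0) (fun _ _ => 1).
Proof.
rewrite -sum_exchange_swapop.
by apply: eq_bigr => a _; apply: eq_bigr => b _; rewrite scale1r.
Qed.

Definition kappa (y : 'I_N -> C) (a b : 'I_N) : C := 2 / (y a - y b).

Lemma kappaC y a b : kappa y b a = - kappa y a b.
Proof. by rewrite /kappa -opprB invrN mulrN. Qed.

Lemma kappa_diag y a : kappa y a a = 0.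
Proof. by rewrite /kappa subrr invr0 mulr0. Qed.

Lemma Fmx_swapop s :
  Fmx s = swapop (fun _ _ => 1) (fun a b : 'I_N => - ((a < b)%N%:R * kappa (xvar s) a b)).
Proof.
rewrite /Fmx; have -> : \sum_(a < N) \sum_(b < N | (a < b)%N)
      (2 / (xvar s a - xvar s b)) *: tens2 (Emx R a b) (Emx R b a) =
    swapop (fun _ _ => 0) (fun a b : 'I_N => (a < b)%N%:R * kappa (xvar s) a b).
  rewrite -sum_exchange_swapop; apply: eq_bigr => a _; rewrite big_mkcond /=.
  by apply: eq_bigr => b _; case: ltnP => _; rewrite ?mul1r ?mul0r ?scale0r.
rewrite swapop1 -scaleN1r swapopZ swapopD.
by congr swapop; apply/funext => a; apply/funext => b; ring.
Qed.

Lemma invmx_Fmx s :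
  invmx (Fmx s) = swapop (fun _ _ => 1) (fun a b : 'I_N => (a < b)%N%:R * kappa (xvar s) a b).
Proof.
apply: mulmx1_invmx.
rewrite Fmx_swapop swapop_mul swapop1; congr swapop; apply/funext => a; apply/funext => b.
- by case: (ltngtP a b) => _ /=; ring.
- by ring.
Qed.

(* On the diagonal [kappa y a a = 2 / 0 = 0], so [Rred u y] acts by [u + 1] on e_a (x) e_a. *)
Definition Rred (u : C) (y : 'I_N -> C) : op2 R N :=
  swapop (fun a b => u * (1 - (b < a)%N%:R * kappa y a b ^+ 2))
         (fun a b => 1 + u * kappa y a b).

Lemma Rdyn_Rred u s : Rdyn u s = (rho N u / (u + 1)) *: Rred u (xvar s).
Proof.
rewrite /Rdyn /op21 /Ryang invmx_Fmx Fmx_swapop flip_swapop swapop1 !swapopZ swapopD.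
rewrite !swapopZ !swapop_mul; congr swapop; apply/funext => a; apply/funext => b.
all: case: (ltngtP a b) => [ab|ba|/val_inj->] /=; rewrite ?kappa_diag ?[kappa _ b a]kappaC; ring.
Qed.

Lemma entry2_Rdyn s (u : C) :
  u + 1 != 0 -> forall i1 i2 j1 j2 : 'I_N,
    entry2 (Rdyn u s) i1 i2 j1 j2 =
    if (i1 == i2) && (j1 == i1) && (j2 == i1) then rho N u
    else if (i1 != i2) && (j1 == i1) && (j2 == i2) then
      (if (i1 < i2)%N then rho N u * (u / (u + 1))
       else rho N u * ((1 - 4 / (xvar s i1 - xvar s i2) ^+ 2) * (u / (u + 1))))
    else if (i1 != i2) && (j1 == i2) && (j2 == i1) then
      rho N u * ((1 + 2 * u / (xvar s i1 - xvar s i2)) * (1 / (u + 1)))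
    else 0.
Proof.
move=> u1 a b c e.
rewrite -[LHS]/(mxentry (Rdyn u s) (a, b) (c, e)) Rdyn_Rred swapopZ mxentry_swapop /=.
rewrite !xpair_eqE; have [<-|ab] := eqVneq a b.
  rewrite kappa_diag ltnn /=.
  by case: ((c == a) && (e == a)) => /=; field.
have kappa2 : 4 / (xvar s a - xvar s b) ^+ 2 = kappa (xvar s) a b ^+ 2.
  by rewrite /kappa expr_div_n -natrX.
have ukappa : 2 * u / (xvar s a - xvar s b) = u * kappa (xvar s) a b.
  by rewrite /kappa mulrCA mulrA.
rewrite kappa2 ukappa.
have [/andP[/eqP-> /eqP->]|ceab] := boolP ((c == a) && (e == b)).
  rewrite (negbTE ab) /=.
  by case: (ltngtP a b) => [_|_|/val_inj eq_ab] /=; [field | field | rewrite eq_ab eqxx in ab].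
have [/andP[/eqP-> /eqP->]|ceba] := boolP ((c == b) && (e == a)).
  by rewrite [b == a]eq_sym (negbTE ab) /=; field.
by rewrite /=; ring.
Qed.

End TwoSiteOperators.

Section InverseCartanMatrix.
Variables (R : realType) (N : nat).
Hypothesis N_gt0 : (0 < N)%N.
Local Notation C := R[i].

(* d_ij = [invcartan_coef i j] for 1 <= i, j <= N - 1: the Green function of the Cartan matrix
   (discrete Laplacian) with zero boundary values at 0 and N. *)
Definition invcartan_coef (p q : nat) : C := (minn p q)%:R - (p * q)%:R / N%:R.
Local Notation g := invcartan_coef.

Lemma natN_neq0 : (N%:R : C) != 0.
Proof. by rewrite pnatr_eq0 -lt0n. Qed.

Lemma invcartan_coefC p q : g p q = g q p.
Proof. by rewrite /g minnC mulnC. Qed.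

Lemma invcartan_coef0 q : g 0 q = 0.
Proof. by rewrite /g min0n mul0n mul0r subr0. Qed.

Lemma invcartan_coefN q : (q <= N)%N -> g N q = 0.
Proof.
by move=> qN; rewrite /g (minn_idPr qN) natrM mulrAC (divff natN_neq0) mul1r subrr.
Qed.

Lemma invcartan_coef_laplacian p q :
  2 * g p.+1 q - g p.+2 q - g p q = (p.+1 == q)%:R.
Proof.
have min_eq : (minn p.+2 q + minn p q + (p.+1 == q) = 2 * minn p.+1 q)%N.
  by case: eqP; lia.
have -> : (p.+1 == q)%:R = 2 * (minn p.+1 q)%:R - (minn p.+2 q)%:R - (minn p q)%:R :> C.
  by rewrite -natrM -min_eq !natrD; ring.
by rewrite /g !natrM; field; exact: natN_neq0.
Qed.

Lemma invcartan_coef_mixed p q :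
  g p.+1 q.+1 - g p.+1 q - g p q.+1 + g p q = (p == q)%:R - N%:R^-1.
Proof.
have min_eq : (minn p.+1 q.+1 + minn p q = minn p.+1 q + minn p q.+1 + (p == q))%N.
  by case: eqP; lia.
have -> : (p == q)%:R = (minn p.+1 q.+1)%:R + (minn p q)%:R - (minn p.+1 q)%:R
                        - (minn p q.+1)%:R :> C.
  by rewrite -natrD min_eq !natrD; ring.
by rewrite /g !natrM; field; exact: natN_neq0.
Qed.

Lemma cartanE (i k : 'I_N.-1) :
  cartan R N i k = 2 * (k == i :> nat)%:R - (k == i.+1 :> nat)%:R - (k.+1 == i)%:R.
Proof.
rewrite mxE -(inj_eq val_inj) /= [(k : nat) == i]eq_sym [(k : nat) == i.+1]eq_sym.
by case: eqP => ?; case: eqP => ?; case: eqP => ? /=; try (by exfalso; lia); ring.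
Qed.

Lemma cartan_row (f : nat -> C) (i : 'I_N.-1) : f 0 = 0 -> f N = 0 ->
  \sum_(k < N.-1) cartan R N i k * f k.+1 = 2 * f i.+1 - f i.+2 - f i.
Proof.
move=> f0 fN.
under eq_bigr do rewrite cartanE !mulrBl -mulrA.
set F := fun k => f k.+1.
rewrite !sumrB -mulr_sumr (sum_ord_delta _ _ F) (sum_ord_delta _ _ F) ltn_ord /F.
have -> : (if (i.+1 < N.-1)%N then f i.+2 else 0) = f i.+2.
  by case: ltnP => // iN; have -> : i.+2 = N by have := ltn_ord i; lia.
congr (_ - _); case: i => -[|i] lt_i /=.
  by rewrite f0 big1 // => k _; rewrite mul0r.
by under eq_bigr do rewrite eqSS; rewrite (sum_ord_delta _ _ F) (ltnW lt_i).
Qed.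

Lemma ord_pred_ltn (i : 'I_N.-1) : (i < N)%N.
Proof. exact: leq_trans (ltn_ord i) (leq_pred N). Qed.

Lemma invcartanE : invcartan R N = \matrix_(i, j) g i.+1 j.+1.
Proof.
apply: mulmx1_invmx; apply/matrixP => i j; rewrite mxE [RHS]mxE.
under eq_bigr do rewrite [X in _ * X]mxE.
rewrite (cartan_row (f := fun p => g p j.+1)) ?invcartan_coef0 ?invcartan_coefN //.
- by rewrite invcartan_coef_laplacian eqSS.
- exact: ord_pred_ltn.
Qed.

Lemma hvee_evE (i : 'I_N.-1) (k : 'I_N) : hvee_ev R i k = g i.+1 k.+1 - g i.+1 k.
Proof.
rewrite /hvee_ev invcartanE /h_ev.
under eq_bigr do rewrite mxE mulrBr ![g _ _ * _]mulrC.
set F := fun j => g i.+1 j.+1.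
rewrite sumrB (sum_ord_delta _ _ F) /F; congr (_ - _).
  case: ltnP => // kN; have -> : k.+1 = N by have := ltn_ord k; lia.
  by rewrite invcartan_coefC invcartan_coefN // ord_pred_ltn.
case: k => -[|k] lt_k /=.
  by rewrite invcartan_coefC invcartan_coef0 big1 // => j _; rewrite mul0r.
by under eq_bigr do rewrite eqSS; rewrite (sum_ord_delta _ _ F) ifT //; lia.
Qed.

Lemma sext_sshift s (k : 'I_N) p : (p <= N)%N ->
  sext (sshift s k) p = sext s p + g p k.+1 - g p k.
Proof.
case: p => [|p] pN /=; first by rewrite !invcartan_coef0 subr0 addr0.
case: insubP => [i _ <-|pN']; first by rewrite /sshift hvee_evE addrA.
have -> : p.+1 = N by move: pN'; rewrite -leqNgt; lia.
by rewrite !invcartan_coefN ?subr0 ?addr0 //; apply: ltnW.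
Qed.

Lemma xvar_sshift (s : 'I_N.-1 -> C) (k a : 'I_N) :
  xvar (sshift s k) a = xvar s a + 2 * (a == k)%:R - 2 / N%:R.
Proof.
rewrite /xvar (sext_sshift _ _ (ltn_ord a)) (sext_sshift _ _ (ltnW (ltn_ord a))).
have -> : (a == k)%:R = g a.+1 k.+1 - g a.+1 k - g a k.+1 + g a k + N%:R^-1 :> C.
  by rewrite invcartan_coef_mixed subrK.
ring.
Qed.

End InverseCartanMatrix.

Section ThreeSiteOperators.
Variables (R : realType) (N : nat).
Local Notation C := R[i].
Implicit Types (al be : 'I_N -> 'I_N -> 'I_N -> C) (f g : 'I_N -> op2 R N).

Lemma mxentry_lift12 al be (x y : 'I_N * 'I_N * 'I_N) :
  mxentry (lift12 (fun k => swapop (al k) (be k))) x y =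
  al x.2 x.1.1 x.1.2 * (y == x)%:R + be x.2 x.1.1 x.1.2 * (y == (x.1.2, x.1.1, x.2))%:R.
Proof.
case: x y => -[a b] c [[a' b'] c']; rewrite /mxentry /lift12 mxE !enum_rankK /=.
rewrite -[swapop _ _ _ _]/(mxentry _ (a, b) (a', b')) mxentry_swapop /= !xpair_eqE.
by have [->|_] := eqVneq c c'; rewrite ?andbT ?andbF ?andFb /= ?mulr1 ?mulr0 ?addr0.
Qed.

Lemma mxentry_lift13 al be (x y : 'I_N * 'I_N * 'I_N) :
  mxentry (lift13 (fun k => swapop (al k) (be k))) x y =
  al x.1.2 x.1.1 x.2 * (y == x)%:R + be x.1.2 x.1.1 x.2 * (y == (x.2, x.1.2, x.1.1))%:R.
Proof.
case: x y => -[a b] c [[a' b'] c']; rewrite /mxentry /lift13 mxE !enum_rankK /=.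
rewrite -[swapop _ _ _ _]/(mxentry _ (a, c) (a', c')) mxentry_swapop /= !xpair_eqE.
by have [->|_] := eqVneq b b'; rewrite ?andbT ?andbF ?andFb /= ?mulr1 ?mulr0 ?addr0.
Qed.

Lemma mxentry_lift23 al be (x y : 'I_N * 'I_N * 'I_N) :
  mxentry (lift23 (fun k => swapop (al k) (be k))) x y =
  al x.1.1 x.1.2 x.2 * (y == x)%:R + be x.1.1 x.1.2 x.2 * (y == (x.1.1, x.2, x.1.2))%:R.
Proof.
case: x y => -[a b] c [[a' b'] c']; rewrite /mxentry /lift23 mxE !enum_rankK /=.
rewrite -[swapop _ _ _ _]/(mxentry _ (b, c) (b', c')) mxentry_swapop /= !xpair_eqE.
by have [->|_] := eqVneq a a'; rewrite ?andbT ?andbF ?andFb /= ?mulr1 ?mulr0 ?addr0.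
Qed.

Lemma lift12Z (c : C) f g : (forall k, f k = c *: g k) -> lift12 f = c *: lift12 g.
Proof.
move=> fg; apply/matrixP => i j; rewrite [RHS]mxE !mxE.
by case: (enum_val i) => -[? ?] ?; case: (enum_val j) => -[? ?] ?; rewrite fg mxE mulrA.
Qed.

Lemma lift13Z (c : C) f g : (forall k, f k = c *: g k) -> lift13 f = c *: lift13 g.
Proof.
move=> fg; apply/matrixP => i j; rewrite [RHS]mxE !mxE.
by case: (enum_val i) => -[? ?] ?; case: (enum_val j) => -[? ?] ?; rewrite fg mxE mulrA.
Qed.

Lemma lift23Z (c : C) f g : (forall k, f k = c *: g k) -> lift23 f = c *: lift23 g.
Proof.
move=> fg; apply/matrixP => i j; rewrite [RHS]mxE !mxE.
by case: (enum_val i) => -[? ?] ?; case: (enum_val j) => -[? ?] ?; rewrite fg mxE mulrA.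
Qed.

(* [xvar (sshift s k)] is [shift_at (xvar s) k] up to the constant [- 2 / N] ([xvar_sshift]). *)
Definition shift_at (y : 'I_N -> C) (k : 'I_N) : 'I_N -> C := fun a => y a + 2 * (a == k)%:R.

Definition generic_diffs (y : 'I_N -> C) : Prop :=
  forall a b : 'I_N, a != b -> [/\ y a - y b != 0, y a - y b != 2 & y a - y b != -2].

Lemma generic_diffs_neq0 y a b e : generic_diffs y -> a != b ->
  [\/ e = y a - y b, e = y a - y b - 2 | e = y a - y b + 2] -> e != 0.
Proof.
move=> gen /gen[d0 d2 dm2]; case=> ->; [exact: d0 | rewrite subr_eq0 | rewrite addr_eq0] => //.
Qed.

Ltac case_eqs := repeat match goal with
  | H : ?x <> ?x |- _ => by case: H
  | |- context [?x == ?y] => case: (x =P y) => [?|?]; try subst; rewrite ?xpair_eqE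
  end.

Ltac case_ltns := repeat match goal with
  | |- context [(?x < ?y)%N] => case: (ltnP x y) => ?
  end.

Ltac ord_neq_nat := repeat match goal with
  | H : ?x <> ?y |- _ =>
    lazymatch goal with
    | _ : nat_of_ord x <> nat_of_ord y |- _ => fail
    | _ => let H' := fresh in have H' : nat_of_ord x <> nat_of_ord y by move/val_inj
    end
  end.

Ltac nonzero_denominator gen :=
  match goal with
  | |- is_true ((_ != 0) && _) => apply/andP; split; nonzero_denominator gen
  | |- is_true (_ != 0) =>
    match goal with H : ?a <> ?b |- _ =>
      first [ apply: (generic_diffs_neq0 gen (introN eqP H))
            | apply: (generic_diffs_neq0 gen (introN eqP (nesym H))) ];
      solve [ apply: Or31; ring | apply: Or32; ring | apply: Or33; ring ]
    end
  end.

Lemma Rred_dybe y : generic_diffs y -> forall u v : C,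
  lift12 (fun k => Rred u (shift_at y k)) *m lift13 (fun _ => Rred (u + v) y) *m
    lift23 (fun k => Rred v (shift_at y k)) =
  lift23 (fun _ => Rred v y) *m lift13 (fun k => Rred (u + v) (shift_at y k)) *m
    lift12 (fun _ => Rred u y).
Proof.
move=> gen u v; apply: mxentryP => x z; rewrite -!mulmxA /Rred.
rewrite (mxentry_mul_sparse _ (mxentry_lift12 _ _)) !(mxentry_mul_sparse _ (mxentry_lift13 _ _)).
rewrite (mxentry_mul_sparse _ (mxentry_lift23 _ _)) !(mxentry_mul_sparse _ (mxentry_lift13 _ _)).
rewrite !mxentry_lift23 !mxentry_lift12.
case: x => -[a b] c; rewrite /kappa /shift_at /=.
case_eqs; case_ltns; ord_neq_nat; try (by exfalso; lia).
all: rewrite /= ?subrr ?invr0 ?mulr0. (* coinciding indices give 2 / (t - t) = 0 *)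
all: first [ring | field; nonzero_denominator gen].
Qed.

End ThreeSiteOperators.

Section ShiftedRMatrix.
Variables (R : realType) (N : nat).
Hypothesis N_gt0 : (0 < N)%N.
Local Notation C := R[i].

Lemma kappa_translate (y : 'I_N -> C) (t : C) a b : kappa (fun c => y c + t) a b = kappa y a b.
Proof. by rewrite /kappa opprD addrACA subrr addr0. Qed.

Lemma Rred_translate (u : C) (y : 'I_N -> C) (t : C) : Rred u (fun c => y c + t) = Rred u y.
Proof.
by rewrite /Rred; congr swapop; do 2!apply/funext => ?; rewrite kappa_translate.
Qed.

Lemma Rdyn_sshift (u : C) (s : 'I_N.-1 -> C) (k : 'I_N) :
  Rdyn u (sshift s k) = (rho N u / (u + 1)) *: Rred u (shift_at (xvar s) k).
Proof.
rewrite Rdyn_Rred.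
have -> : xvar (sshift s k) = fun a => shift_at (xvar s) k a + - (2 / N%:R).
  by apply/funext => a; rewrite xvar_sshift.
by rewrite Rred_translate.
Qed.

End ShiftedRMatrix.

Theorem mainTheorem2 (R : realType) (N : nat) (s : 'I_N.-1 -> R[i]) :
  (2 <= N)%N ->
  (* genericity of s *)
  (forall a b : 'I_N, a != b ->
     [/\ xvar s a - xvar s b != 0, xvar s a - xvar s b != 2
       & xvar s a - xvar s b != -2]) ->
  (* entries of R(u,s) *)
  (forall (u : R[i]), u + 1 != 0 ->
     forall i1 i2 j1 j2 : 'I_N,
       entry2 (Rdyn u s) i1 i2 j1 j2 =
       if (i1 == i2) && (j1 == i1) && (j2 == i1) then rho N u
       else if (i1 != i2) && (j1 == i1) && (j2 == i2) then
         (if (i1 < i2)%N then rho N u * (u / (u + 1))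
          else rho N u * ((1 - 4 / (xvar s i1 - xvar s i2) ^+ 2) * (u / (u + 1))))
       else if (i1 != i2) && (j1 == i2) && (j2 == i1) then
         rho N u * ((1 + 2 * u / (xvar s i1 - xvar s i2)) * (1 / (u + 1)))
       else 0)
  /\
  (* dynamical Yang--Baxter equation *)
  (forall beta beta' : R[i],
     lift12 (fun k => Rdyn beta (sshift s k)) *m
     lift13 (fun _ => Rdyn (beta + beta') s) *m
     lift23 (fun k => Rdyn beta' (sshift s k))
     =
     lift23 (fun _ => Rdyn beta' s) *m
     lift13 (fun k => Rdyn (beta + beta') (sshift s k)) *m
     lift12 (fun _ => Rdyn beta s)).
Proof.
move=> N2 gen; split=> [u|u v]; first exact: entry2_Rdyn.
have N_gt0 : (0 < N)%N := ltnW N2.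
rewrite (lift12Z (Rdyn_sshift N_gt0 u s)) (lift13Z (fun=> Rdyn_Rred (u + v) s)).
rewrite (lift23Z (Rdyn_sshift N_gt0 v s)) (lift23Z (fun=> Rdyn_Rred v s)).
rewrite (lift13Z (Rdyn_sshift N_gt0 (u + v) s)) (lift12Z (fun=> Rdyn_Rred u s)).
rewrite -!scalemxAl -!scalemxAr -!scalemxAl !scalerA (Rred_dybe gen).
by congr (_ *: _); ring.
Qed.
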